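(* For all $a,b>0$ and $0\le v\le 1$, $$L(a,b)\le \frac{1}{2}A_v(a,b)+\frac{1}{2}G_{1-v}(a,b).$$
   Context: For $a,b>0$ and $0\le v\le 1$: $A_v(a,b):=(1-v)a+vb$, $G_v(a,b):=a^{1-v}b^v$ (so $G_{1-v}(a,b)=a^vb^{1-v}$). The logarithmic mean is $L(a,b):=\frac{a-b}{\log a-\log b}$ for $a\ne b$ and $L(a,a):=a$. *)

From Stdlib Require Import Reals.
Open Scope R_scope.

Definition A_v (v a b : R) : R := (1 - v) * a + v * b.

Definition G_v (v a b : R) : R := Rpower a (1 - v) * Rpower b v.

Definition Lmean (a b : R) : R :=
  if Req_EM_T a b then a else (a - b) / (ln a - ln b).

From Stdlib Require Import Reals Lra Psatz.
From Coquelicot Require Import Coquelicot.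
Open Scope R_scope.

(* Put G = a^v b^(1-v).  Since a - b = (a - G) + (G - b) while ln a - ln G and
   ln G - ln b are the fractions 1-v and v of ln a - ln b, the logarithmic mean
   splits as L(a,b) = (1-v) L(a,G) + v L(G,b).  The classical inequality
   L <= A applied to both terms gives the bound. *)

Lemma exp_logmean_ineq (x : R) : 0 <= x * (x * (exp x + 1) - 2 * (exp x - 1)).
Proof.
  (* g is nondecreasing with g 0 = 0, so g x has the sign of x. *)
  set (g := fun y => y * (exp y + 1) - 2 * (exp y - 1)).
  assert (g'_ge0 : forall y, 0 <= 1 - exp y + y * exp y).
  { intros y.
    (* 1 - y <= exp (- y), multiplied by exp y *)
    pose proof (exp_ineq1_le (- y)).
    assert (exp (- y) * exp y = 1)
      by (rewrite <- exp_plus, Rplus_opp_l; exact exp_0).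
    pose proof (exp_pos y); nra. }
  destruct (MVT_gen g 0 x (fun y => 1 - exp y + y * exp y)) as [c [_ Hc]].
  - intros y _; unfold g; auto_derive; [exact I | ring].
  - intros y _; apply continuity_pt_filterlim.
    apply (ex_derive_continuous (K := R_AbsRing) (V := R_NormedModule)).
    unfold g; auto_derive; exact I.
  - assert (g 0 = 0) by (unfold g; rewrite exp_0; ring).
    fold (g x); pose proof (g'_ge0 c); nra.
Qed.

Lemma Lmean_diag (a : R) : Lmean a a = a.
Proof. unfold Lmean; destruct (Req_EM_T a a); congruence. Qed.

Lemma Lmean_mul_ln_sub (a b : R) :
  0 < a -> 0 < b -> Lmean a b * (ln a - ln b) = a - b.
Proof.
  intros ha hb; unfold Lmean; destruct (Req_EM_T a b) as [-> | Hne].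
  - ring.
  - field; intro Hln; apply Hne, ln_inv; lra.
Qed.

Lemma Lmean_le_arith (a b : R) : 0 < a -> 0 < b -> Lmean a b <= (a + b) / 2.
Proof.
  intros ha hb; destruct (Req_dec a b) as [-> | Hne].
  { rewrite Lmean_diag; lra. }
  set (x := ln a - ln b).
  assert (Hx : x <> 0) by (intro; apply Hne, ln_inv; unfold x in *; lra).
  assert (Ha : a = b * exp x)
    by (unfold x, Rminus; rewrite exp_plus, exp_Ropp, !exp_ln by assumption;
        field; lra).
  pose proof (Lmean_mul_ln_sub a b ha hb) as HL; fold x in HL.
  pose proof (exp_logmean_ineq x) as Hg.
  assert (0 < x * x) by (destruct (Rdichotomy _ _ Hx); nra).
  (* b * Hg reads x^2 (a + b) - 2 x^2 L(a,b) >= 0 *)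
  assert (0 <= x * x * (a + b - 2 * Lmean a b)); [|nra].
  replace (x * x * (a + b - 2 * Lmean a b))
    with (b * (x * (x * (exp x + 1) - 2 * (exp x - 1)))).
  - apply Rmult_le_pos; lra.
  - transitivity (x * x * (a + b) - 2 * x * (Lmean a b * x)); [rewrite HL, Ha | ]; ring.
Qed.

Lemma G_v_pos (w a b : R) : 0 < G_v w a b.
Proof. apply Rmult_lt_0_compat; apply exp_pos. Qed.

Lemma ln_G_v (w a b : R) :
  0 < a -> 0 < b -> ln (G_v w a b) = (1 - w) * ln a + w * ln b.
Proof.
  intros ha hb; unfold G_v, Rpower.
  rewrite ln_mult by apply exp_pos; rewrite !ln_exp; reflexivity.
Qed.

Lemma Lmean_G_v_split (w a b : R) : 0 < a -> 0 < b ->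
  Lmean a b = w * Lmean a (G_v w a b) + (1 - w) * Lmean (G_v w a b) b.
Proof.
  intros ha hb; set (G := G_v w a b).
  assert (hG : 0 < G) by apply G_v_pos.
  assert (lnG : ln G = (1 - w) * ln a + w * ln b) by (apply ln_G_v; assumption).
  destruct (Req_dec a b) as [<- | Hne].
  - assert (G = a) as -> by (apply ln_inv; [assumption | assumption | lra]).
    rewrite Lmean_diag; ring.
  - assert (Hc : ln a - ln b <> 0) by (intro; apply Hne, ln_inv; lra).
    apply (Rmult_eq_reg_r (ln a - ln b)); [|exact Hc].
    rewrite Lmean_mul_ln_sub by assumption.
    pose proof (Lmean_mul_ln_sub a G ha hG) as HaG.
    pose proof (Lmean_mul_ln_sub G b hG hb) as HGb.
    rewrite lnG in HaG, HGb.
    replace (a - b) with ((a - G) + (G - b)) by ring.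
    rewrite <- HaG, <- HGb; ring.
Qed.

Theorem theorem2p5 (a b v : R) (ha : 0 < a) (hb : 0 < b)
  (hv0 : 0 <= v) (hv1 : v <= 1) :
  Lmean a b <= / 2 * A_v v a b + / 2 * G_v (1 - v) a b.
Proof.
  set (G := G_v (1 - v) a b).
  assert (hG : 0 < G) by apply G_v_pos.
  rewrite (Lmean_G_v_split (1 - v) a b ha hb); fold G.
  pose proof (Lmean_le_arith a G ha hG).
  pose proof (Lmean_le_arith G b hG hb).
  unfold A_v; nra.
Qed.
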